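(* Let $(\mathcal{O},g,f)$ be an oriented matroid program with $\mathcal{O}$ of rank $r\ge 3$, and let $(C,X,Y)$ be a modular triple of cocircuits such that $z(C\circ X\circ Y)$ is a flat of rank $r-3$ of $\mathcal{M}(\mathcal{O})$, with $X_g=Y_g=+$ and $C_g=C_f=0$. Let $X^1,Y^1$ be distinct cocircuits with $X^1_g=Y^1_g=+$ such that $z(X^1)\supseteq z(X\circ C)$, $z(Y^1)\supseteq z(Y\circ C)$, $X\neq X^1\neq C$, $Y\neq Y^1\neq C$, and $X^1\circ Y^1$ is an edge. Then $X^1\leftrightarrow_{g,f}X$ and $Y^1\leftrightarrow_{g,f}Y$, and moreover $X^1\to_{g,f}Y^1$ if and only if $X\to_{g,f}Y$.
   Context: Oriented matroid $\mathcal{O}$ of rank $r$ on finite $E$, given by its cocircuits (sign vectors in $\{+,-,0\}^E$), underlying matroid $\mathcal{M}(\mathcal{O})$. Notation: $z(X)$ zero set, $\operatorname{sep}(X,Y)=\{e:X_e=-Y_e\ne0\}$, $(X\circ Y)_e=X_e$ if $X_e\ne0$, else $Y_e$. An edge is a covector whose zero set is a flat of rank $r-2$; cocircuits $X\ne\pm Y$ are comodular if $X\circ Y$ is an edge. A modular triple of cocircuits $(C,X,Y)$ is one in which each of the three pairs is comodular. For comodular $X,Y$ and $e\in\operatorname{sep}(X,Y)$, cocircuit elimination of $e$ between $X$ and $Y$ yields the unique cocircuit $Z$ with $Z_e=0$ and $Z_h=(X\circ Y)_h$ for $h\notin\operatorname{sep}(X,Y)$. An oriented matroid program $(\mathcal{O},g,f)$: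 $g\neq f\in E$, $g$ not a loop, $f$ not a coloop. For comodular $X,Y$ with $X_g=Y_g\ne0$, let $Z$ be obtained by eliminating $g$ between $-X$ and $Y$; $X\to_{g,f}Y$ if $Z_f=+$, $X\leftarrow_{g,f}Y$ if $Z_f=-$, $X\leftrightarrow_{g,f}Y$ if $Z_f=0$. *)

From mathcomp Require Import all_boot.
Set Implicit Arguments. Unset Strict Implicit. Unset Printing Implicit Defensive.

(* Signs: None = 0, Some true = +, Some false = - *)
Notation sign := (option bool).
Notation sz := (@None bool).
Notation sp := (Some true).
Notation sm := (Some false).

Section OM.
Variable E : finType.

Definition svec := {ffun E -> sign}.

Definition sv0 : svec := [ffun => None].
Definition svopp (X : svec) : svec := [ffun e => omap negb (X e)].
Definition svcomp (X Y : svec) : svec :=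
  [ffun e => if X e is Some b then Some b else Y e].
Definition zset (X : svec) : {set E} := [set e | X e == None].
Definition supp (X : svec) : {set E} := [set e | X e != None].
Definition sep (X Y : svec) : {set E} :=
  [set e | (X e != None) && (X e == omap negb (Y e))].

(* Signed cocircuit axioms (C0)-(C3) *)
Definition is_OM (O : {set svec}) : Prop :=
  [/\ sv0 \notin O,
      forall X, X \in O -> svopp X \in O,
      forall X Y, X \in O -> Y \in O -> supp X \subset supp Y ->
                  X = Y \/ X = svopp Y &
      forall X Y e, X \in O -> Y \in O -> X <> svopp Y -> e \in sep X Y ->
        exists2 Z, Z \in O &
          [/\ Z e = None,
              forall h, Z h = sp -> X h = sp \/ Y h = sp &
              forall h, Z h = sm -> X h = sm \/ Y h = sm]].

Definition covector (O : {set svec}) (X : svec) : Prop :=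
  exists2 s : seq svec, all (mem O) s & foldr svcomp sv0 s = X.

Definition is_flat (O : {set svec}) (A : {set E}) : Prop :=
  exists2 X, covector O X & zset X = A.

(* rank of a flat in the (geometric) lattice of flats: F has rank k iff the
   longest strictly increasing chain of flats ending at F has k+1 elements *)
Definition flat_chain (O : {set svec}) (F : {set E}) (s : seq {set E}) : Prop :=
  [/\ sorted (fun A B : {set E} => A \proper B) s,
      forall A, A \in s -> is_flat O A &
      last set0 s = F /\ s <> [::]].

Definition flat_rank (O : {set svec}) (F : {set E}) (k : nat) : Prop :=
  [/\ is_flat O F,
      exists2 s, flat_chain O F s & size s = k.+1 &
      forall s, flat_chain O F s -> size s <= k.+1].

Definition OM_rank (O : {set svec}) (r : nat) : Prop := flat_rank O [set: E] r.

Definition is_loop (O : {set svec}) (e : E) : Prop :=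
  forall X, X \in O -> X e = None.
Definition is_coloop (O : {set svec}) (e : E) : Prop :=
  exists2 X, X \in O & supp X = [set e].

Definition is_edge (O : {set svec}) (r : nat) (X : svec) : Prop :=
  covector O X /\ flat_rank O (zset X) (r - 2).

Definition comodular (O : {set svec}) (r : nat) (X Y : svec) : Prop :=
  [/\ X \in O, Y \in O, X <> Y, X <> svopp Y & is_edge O r (svcomp X Y)].

Definition modular_triple (O : {set svec}) (r : nat) (C X Y : svec) : Prop :=
  [/\ comodular O r C X, comodular O r C Y & comodular O r X Y].

Definition elim_result (O : {set svec}) (X Y : svec) (e : E) (Z : svec) : Prop :=
  [/\ Z \in O, Z e = None &
      forall h, h \notin sep X Y -> Z h = svcomp X Y h].

Definition is_program (O : {set svec}) (g f : E) : Prop :=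
  [/\ is_OM O, g <> f, ~ is_loop O g & ~ is_coloop O f].

(* X ->_{g,f} Y  (val = sp), X <-_{g,f} Y (val = sm), X <->_{g,f} Y (val = sz):
   X,Y comodular, X_g = Y_g <> 0, and the cocircuit Z obtained by eliminating g
   between -X and Y has Z_f = val. *)
Definition prog_rel (O : {set svec}) (r : nat) (g f : E) (v : sign)
    (X Y : svec) : Prop :=
  [/\ comodular O r X Y, X g = Y g, X g <> None &
      exists2 Z, elim_result O (svopp X) Y g Z & Z f = v].

End OM.

From mathcomp Require Import all_boot zify.
Set Implicit Arguments. Unset Strict Implicit. Unset Printing Implicit Defensive.

(* The cocircuits vanishing on a coline [L] (a flat of rank [r - 2]) are
   determined up to sign by any further zero outside [L].  Hence elimination
   between two of them is modular, and two of them that agree at one point of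
   [z(V) \ L], [V] a third one, agree on all of [z(V) \ L].
   For [X1 <-> X]: eliminating [g] between [-X1] and [X] gives a cocircuit
   vanishing on the coline [z(C) & z(X)] and at [g], i.e. [+-C], whose
   [f]-entry is [C_f = 0]; likewise for [Y1 <-> Y].
   For the equivalence, take [b] in [z(C) & z(Y)] outside the rank [r - 3]
   flat [K = z(C o X o Y)].  On the coline [z(C) & z(X)], [X] and [X1] agree at
   [g], hence at [b].  The eliminants [W] of [(-X, Y)] and [W1] of [(-X1, Y1)]
   at [g] both vanish on the coline [z(C) & z(W)] (for [W1] by counting ranks
   above [K]) and both equal [-X_b] at [b], hence agree at [f]. *)

Section SignVectors.
Variable E : finType.
Implicit Types X Y : svec E.

Lemma zset_svcomp X Y : zset (svcomp X Y) = zset X :&: zset Y.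
Proof. by apply/setP=> e; rewrite !inE ffunE; case: (X e). Qed.

Lemma svoppK : involutive (@svopp E).
Proof. by move=> X; apply/ffunP=> e; rewrite !ffunE; case: (X e) => [[]|]. Qed.

Lemma zset_svopp X : zset (svopp X) = zset X.
Proof. by apply/setP=> e; rewrite !inE ffunE; case: (X e). Qed.

Lemma zset_foldr_svcomp (s : seq (svec E)) :
  zset (foldr (@svcomp E) (sv0 E) s) = \bigcap_(X <- s) zset X.
Proof.
elim: s => [|X s IH] /=; last by rewrite zset_svcomp IH big_cons.
by rewrite big_nil; apply/setP=> e; rewrite !inE ffunE.
Qed.

End SignVectors.

Section FlatChains.
Variables (E : finType) (O : {set svec E}).

Lemma flat_chain_cat (F : {set E}) (s t : seq {set E}) :
  flat_chain O F s -> path (fun A B : {set E} => A \proper B) F t ->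
  {in t, forall A, is_flat O A} -> flat_chain O (last F t) (s ++ t).
Proof.
case: s => [|A s] [/= sorted_s flat_s [/= last_s _]] // path_t flat_t.
split => /=.
- by rewrite cat_path sorted_s last_s.
- by move=> B; rewrite -cat_cons mem_cat => /orP[/flat_s | /flat_t].
- by rewrite last_cat last_s.
Qed.

Lemma flat_rank_chain_bound r (F : {set E}) k (t : seq {set E}) :
  OM_rank O r -> flat_rank O F k ->
  path (fun A B : {set E} => A \proper B) F t -> {in t, forall A, is_flat O A} ->
  last F t = setT -> k + size t <= r.
Proof.
move=> [_ _ max_chain] [_ [s chain_s size_s] _] path_t flat_t last_t.
have := max_chain (s ++ t); rewrite size_cat size_s -last_t; apply.
exact: flat_chain_cat.
Qed.

Lemma flat_rank_uniq (F : {set E}) k l :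
  flat_rank O F k -> flat_rank O F l -> k = l.
Proof.
move=> [_ [s chain_s size_s] max_k] [_ [t chain_t size_t] max_l].
by apply/eqP; rewrite eqn_leq -ltnS -size_s max_l // -ltnS -size_t max_k.
Qed.

Definition corank_le2 (L : {set E}) :=
  forall M N, is_flat O M -> is_flat O N ->
  L \proper M -> M \proper N -> N \proper setT -> False.

Lemma corank_le2_of_rank r (L : {set E}) :
  OM_rank O r -> flat_rank O L (r - 2) -> corank_le2 L.
Proof.
move=> rankO rankL M N flatM flatN LM MN NT.
have := flat_rank_chain_bound (t := [:: M; N; setT]) rankO rankL.
rewrite /= LM MN NT => /(_ isT) bound.
suff: r - 2 + 3 <= r by lia.
apply: bound => // A; rewrite !inE => /or3P[] /eqP-> //; by case: rankO.
Qed.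

Lemma corank_le2_proper_superset r (K L : {set E}) :
  OM_rank O r -> flat_rank O K (r - 3) ->
  is_flat O L -> K \proper L -> corank_le2 L.
Proof.
move=> rankO rankK flatL KL M N flatM flatN LM MN NT.
have := flat_rank_chain_bound (t := [:: L; M; N; setT]) rankO rankK.
rewrite /= KL LM MN NT => /(_ isT) bound.
suff: r - 3 + 4 <= r by lia.
apply: bound => // A; rewrite !inE => /or4P[] /eqP-> //; by case: rankO.
Qed.

End FlatChains.

Section Cocircuits.
Variables (E : finType) (O : {set svec E}).
Hypothesis omO : is_OM O.
Implicit Types (P Q X Y Z W : svec E) (L : {set E}).

Lemma covector_svcomp P Q : P \in O -> Q \in O -> covector O (svcomp P Q).
Proof.
move=> PO QO; exists [:: P; Q]; first by rewrite /= PO QO.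
by apply/ffunP=> e; rewrite /= !ffunE; case: (P e) => //; case: (Q e).
Qed.

Lemma zset_cocircuit_flat P : P \in O -> is_flat O (zset P).
Proof.
move=> PO; exists P => //; exists [:: P]; first by rewrite /= PO.
by apply/ffunP=> e; rewrite /= !ffunE; case: (P e).
Qed.

Lemma flatI (A B : {set E}) : is_flat O A -> is_flat O B -> is_flat O (A :&: B).
Proof.
case=> _ [s Os <-] <- [_ [t Ot <-] <-].
exists (foldr (@svcomp E) (sv0 E) (s ++ t)); first by exists (s ++ t); rewrite ?all_cat ?Os.
by rewrite !zset_foldr_svcomp big_cat.
Qed.

Lemma zset_cocircuit_proper P : P \in O -> zset P \proper setT.
Proof.
case: omO => O0 _ _ _ PO; rewrite properT; apply: contraNneq O0 => zsetP.
suff -> : sv0 E = P by [].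
by apply/ffunP=> e; have := in_setT e; rewrite -zsetP inE ffunE => /eqP.
Qed.

Lemma svopp_cocircuit P : P \in O -> svopp P \in O.
Proof. by case: omO => _ C1 _ _; apply: C1. Qed.

Lemma cocircuit_eq_of_zset_sub P Q :
  P \in O -> Q \in O -> zset Q \subset zset P -> P = Q \/ P = svopp Q.
Proof.
case: omO => _ _ C2 _ PO QO zQP; apply: C2 => //; apply/subsetP => e.
by rewrite !inE; apply: contra => /eqP Qe; have := subsetP zQP e; rewrite !inE Qe => /(_ isT).
Qed.

Lemma cocircuit_supp_sub_zero P Q e :
  P \in O -> Q \in O -> (forall k, P k != None -> Q k != None) ->
  P e = None -> Q e != None -> False.
Proof.
move=> PO QO PQ Pe Qe; have [PQ' | PQ'] : P = Q \/ P = svopp Q.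
  apply: cocircuit_eq_of_zset_sub => //; apply/subsetP => k; rewrite !inE.
  by apply: contraLR => /PQ.
all: by move: Pe Qe; rewrite PQ' ?ffunE; case: (Q e).
Qed.

Section Colines.
Variable L : {set E}.
Hypothesis corankL : corank_le2 O L.

Lemma corank_le2_cocircuit_eq P Q h :
  P \in O -> Q \in O -> L \subset zset P -> L \subset zset Q ->
  h \in zset P -> h \in zset Q -> h \notin L -> Q = P \/ Q = svopp P.
Proof.
move=> PO QO LP LQ hP hQ hL.
have L_PQ : L \proper zset P :&: zset Q.
  by apply/properP; split; [rewrite subsetI LP LQ | exists h; rewrite // inE hP hQ].
have [PQ_P | PQ_P] := eqVneq (zset P :&: zset Q) (zset P).
  by apply: cocircuit_eq_of_zset_sub; rewrite // -PQ_P subsetIr.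
have PQ_proper : zset P :&: zset Q \proper zset P by rewrite properEneq PQ_P subsetIl.
case: (corankL (flatI (zset_cocircuit_flat PO) (zset_cocircuit_flat QO))
  (zset_cocircuit_flat PO) L_PQ PQ_proper (zset_cocircuit_proper PO)).
Qed.

Lemma corank_le2_zsetI P Q :
  P \in O -> Q \in O -> L \subset zset P -> L \subset zset Q ->
  P <> Q -> P <> svopp Q -> zset P :&: zset Q = L.
Proof.
move=> PO QO LP LQ PQ PnQ; apply/eqP; rewrite eqEsubset subsetI LP LQ !andbT.
apply/subsetP => h /setIP[hP hQ]; apply/negPn/negP => hL.
case: (corank_le2_cocircuit_eq PO QO LP LQ hP hQ hL) => QP; first by rewrite QP in PQ.
by apply: PnQ; rewrite QP svoppK.
Qed.

End Colines.

Definition signs_within Z X Y :=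
  forall h d, Z h = Some d -> X h = Some d \/ Y h = Some d.

Lemma cocircuit_elim X Y e :
  X \in O -> Y \in O -> X <> svopp Y -> e \in sep X Y ->
  exists2 Z, Z \in O & Z e = None /\ signs_within Z X Y.
Proof.
case: omO => _ _ _ C3 XO YO XnY eXY.
have [Z ZO [Ze Zp Zm]] := C3 X Y e XO YO XnY eXY.
by exists Z => //; split => // h [] /[dup] Zh; [move/Zp | move/Zm].
Qed.

Lemma signs_within_zsetI Z X Y :
  signs_within Z X Y -> zset X :&: zset Y \subset zset Z.
Proof.
move=> ZXY; apply/subsetP => h /setIP[]; rewrite !inE => /eqP Xh /eqP Yh.
by case Zh: (Z h) => [d|] //; case: (ZXY h d Zh); rewrite ?Xh ?Yh.
Qed.

Lemma elim_result_zsetI X Y e Z :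
  elim_result O X Y e Z -> zset X :&: zset Y \subset zset Z.
Proof.
case=> _ _ Zoff; apply/subsetP => h /setIP[]; rewrite !inE => /eqP Xh /eqP Yh.
by rewrite Zoff ?ffunE ?Xh ?Yh // inE Xh.
Qed.

Lemma elim_result_zero_r X Y e Z h :
  elim_result O X Y e Z -> Y h = None -> Z h = X h.
Proof.
case=> _ _ Zoff Yh; rewrite Zoff ?ffunE ?Yh; first by case: (X h).
by rewrite inE Yh; case: (X h).
Qed.

Section ModularElimination.
Variables (L : {set E}) (X Y : svec E) (e : E).
Hypotheses (corankL : corank_le2 O L) (defL : zset X :&: zset Y = L).
Hypotheses (XO : X \in O) (YO : Y \in O) (eXY : e \in sep X Y).

Let Xe : X e != None. Proof. by move: eXY; rewrite inE; case: (X e). Qed.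
Let Ye : Y e != None. Proof. by move: eXY; rewrite inE; case: (X e); case: (Y e). Qed.

Lemma elim_nonzero_off_partner Z Q h :
  Z \in O -> Z e = None -> signs_within Z X Y ->
  Q \in O -> L \subset zset Q -> Q e != None -> Q h = None -> h \notin L ->
  Z h != None.
Proof.
move=> ZO Ze ZXY QO LQ Qe Qh hL; apply/eqP => Zh.
have LZ : L \subset zset Z by rewrite -defL signs_within_zsetI.
have hZ : h \in zset Z by rewrite inE Zh.
have hQ : h \in zset Q by rewrite inE Qh.
by case: (corank_le2_cocircuit_eq corankL ZO QO LZ LQ hZ hQ hL) => QZ;
  move: Qe; rewrite QZ ?ffunE Ze.
Qed.

(* Otherwise eliminating [h] between [X] and [-Y] gives a cocircuit through
   [L] and [h], i.e. [+-Z], and comparing signs puts the support of [Z] inside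
   that of [X] or of [Y], impossible since [Z e = 0]. *)
Lemma elim_nonzero_same_sign Z h b :
  X <> Y -> Z \in O -> Z e = None -> signs_within Z X Y ->
  X h = Some b -> Y h = Some b -> Z h != None.
Proof.
move=> XY ZO Ze ZXY Xh Yh; apply/eqP => Zh.
have hXY : h \in sep X (svopp Y) by rewrite inE !ffunE Xh Yh /= negbK eqxx.
have XnY : X <> svopp (svopp Y) by rewrite svoppK.
have [W WO [Wh WXY]] := cocircuit_elim XO (svopp_cocircuit YO) XnY hXY.
have LZ : L \subset zset Z by rewrite -defL signs_within_zsetI.
have LW : L \subset zset W by rewrite -defL -(zset_svopp Y) signs_within_zsetI.
have hL : h \notin L by rewrite -defL !inE Xh.
have hZ : h \in zset Z by rewrite inE Zh.
have hW : h \in zset W by rewrite inE Wh.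
case: (corank_le2_cocircuit_eq corankL ZO WO LZ LW hZ hW hL) => WZ.
- apply: (cocircuit_supp_sub_zero ZO XO _ Ze Xe) => k.
  case Zk: (Z k) => [d|] // _.
  have := WXY k d; rewrite WZ Zk ffunE => /(_ erefl).
  case: (ZXY k d Zk) => [-> // | Yk]; rewrite Yk; case=> [-> // | ].
  by case: d {Zk Yk}.
- apply: (cocircuit_supp_sub_zero ZO YO _ Ze Ye) => k.
  case Zk: (Z k) => [d|] // _.
  have := WXY k (~~ d); rewrite WZ !ffunE Zk => /(_ erefl).
  case=> [Xk | ]; last by case: (Y k) => // c [] <-; rewrite negbK.
  by case: (ZXY k d Zk) => [ | -> //]; rewrite Xk; case: d {Zk Xk}.
Qed.

(* Axiom (C3) only bounds the signs of the eliminant; for a modular pair it is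
   forced to agree with [X o Y] outside [sep X Y]. *)
Lemma modular_elim : X <> Y -> X <> svopp Y -> exists Z, elim_result O X Y e Z.
Proof.
move=> XY XnY; have [Z ZO [Ze ZXY]] := cocircuit_elim XO YO XnY eXY.
exists Z; split => // h; rewrite inE negb_and ffunE.
case Zh: (Z h) => [d|].
  case: (ZXY h d Zh) => [-> // | ->].
  by case: (X h) => [[]|] //; case: d {Zh}.
have LX : L \subset zset X by rewrite -defL subsetIl.
have LY : L \subset zset Y by rewrite -defL subsetIr.
case Xh: (X h) => [b|]; case Yh: (Y h) => [c|] //= nsep; exfalso.
- have cb : c = b by move: nsep; case: b c {Xh Yh} => [] [].
  by move: (elim_nonzero_same_sign XY ZO Ze ZXY Xh (etrans Yh (congr1 _ cb))); rewrite Zh.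
- have hL : h \notin L by rewrite -defL !inE Xh.
  by have := elim_nonzero_off_partner ZO Ze ZXY YO LY Ye Yh hL; rewrite Zh.
- have hL : h \notin L by rewrite -defL !inE Yh andbF.
  by have := elim_nonzero_off_partner ZO Ze ZXY XO LX Xe Xh hL; rewrite Zh.
Qed.

End ModularElimination.

Section ColineSigns.
Variable L : {set E}.
Hypothesis corankL : corank_le2 O L.

Lemma corank_le2_zero_spread V R p q :
  V \in O -> R \in O -> L \subset zset V -> L \subset zset R ->
  p \in zset V -> q \in zset V -> p \notin L -> R p = None -> R q = None.
Proof.
move=> VO RO LV LR pV qV pL Rp.
have pR : p \in zset R by rewrite inE Rp.
move: qV; case: (corank_le2_cocircuit_eq corankL RO VO LR LV pR pV pL) => ->;
  by rewrite ?zset_svopp inE => /eqP.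
Qed.

(* Otherwise [P q = - Q q], and eliminating [q] between [P] and [Q] yields a
   cocircuit through [L] that keeps the sign [P p] but vanishes at [q], hence
   on all of [zset V]. *)
Lemma corank_le2_sign_agree V P Q p q :
  V \in O -> P \in O -> Q \in O ->
  L \subset zset V -> L \subset zset P -> L \subset zset Q ->
  p \in zset V -> q \in zset V -> p \notin L -> q \notin L ->
  P p = Q p -> P q = Q q.
Proof.
move=> VO PO QO LV LP LQ pV qV pL qL PQp.
have spread_pq := corank_le2_zero_spread VO _ LV _ pV qV pL.
have spread_qp := corank_le2_zero_spread VO _ LV _ qV pV qL.
case Pp: (P p) => [s|]; last by rewrite !spread_pq // -PQp.
apply/eqP; apply/negPn/negP => PQq.
have Pq : P q != None by apply: contraNneq PQq => /spread_qp; rewrite Pp => /(_ PO LP).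
have Qq : Q q != None.
  by apply/eqP => /spread_qp; rewrite -PQp Pp => /(_ QO LQ).
have qPQ : q \in sep P Q.
  by rewrite inE Pq; move: Pq Qq PQq; case: (P q) => [[]|]; case: (Q q) => [[]|].
have PnQ : P <> Q by move=> PQ; rewrite PQ eqxx in PQq.
have PnQ' : P <> svopp Q by move=> PQ; move: PQp Pp; rewrite PQ ffunE; case: (Q p) => [[]|].
have defL := corank_le2_zsetI corankL PO QO LP LQ PnQ PnQ'.
have [Z ZPQ] := modular_elim corankL defL PO QO qPQ PnQ PnQ'.
have [ZO Zq Zoff] := ZPQ.
have LZ : L \subset zset Z by rewrite -defL (elim_result_zsetI ZPQ).
have Zp : Z p = Some s by rewrite Zoff ?ffunE ?Pp // inE Pp -PQp Pp; case: s {Pp PQp}.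
by have := corank_le2_zero_spread VO ZO LV LZ qV pV qL Zq; rewrite Zp.
Qed.

End ColineSigns.

Section Programs.
Variables (r : nat) (g f : E).
Hypothesis rankO : OM_rank O r.

Lemma svopp_neq_of_sign X Y : X g = Y g -> X g != None -> X <> svopp Y.
Proof. by move=> XYg Xg XY; move: XYg Xg; rewrite XY ffunE; case: (Y g) => [[]|]. Qed.

Lemma comodular_corank_le2 X Y : comodular O r X Y -> corank_le2 O (zset X :&: zset Y).
Proof.
by case=> _ _ _ _ [_]; rewrite zset_svcomp; apply: corank_le2_of_rank.
Qed.

Lemma comodular_of_rank X Y :
  X \in O -> Y \in O -> X <> Y -> X <> svopp Y ->
  flat_rank O (zset X :&: zset Y) (r - 2) -> comodular O r X Y.
Proof.
by move=> XO YO XY XnY rankXY; split=> //; split; rewrite ?zset_svcomp //; apply: covector_svcomp.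
Qed.

Lemma prog_elim_exists X Y :
  comodular O r X Y -> X g = Y g -> X g != None ->
  exists W, elim_result O (svopp X) Y g W.
Proof.
move=> XY XYg Xg; have [XO YO nXY XnY _] := XY.
apply: (modular_elim (comodular_corank_le2 XY)); rewrite ?zset_svopp ?svopp_cocircuit //.
- by rewrite inE !ffunE -XYg; case: (X g) Xg => [[]|].
- by move=> XY'; apply: (svopp_neq_of_sign XYg Xg); rewrite -XY' svoppK.
- by move=> XY'; apply: nXY; rewrite -(svoppK X) XY' svoppK.
Qed.

Lemma prog_rel_sz_through C P P1 :
  comodular O r C P -> P1 \in O -> C g = None -> C f = None ->
  P1 g = P g -> P g != None -> P <> P1 -> zset C :&: zset P \subset zset P1 ->
  prog_rel O r g f sz P1 P.
Proof.
move=> CP P1O Cg Cf P1Pg Pg PP1 LP1; have [CO PO _ _ [_ rankL]] := CP.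
rewrite zset_svcomp in rankL; have corankL := comodular_corank_le2 CP.
set L := zset C :&: zset P in rankL corankL LP1.
have P1g : P1 g != None by rewrite P1Pg.
have P1nP := svopp_neq_of_sign P1Pg P1g.
have defL := corank_le2_zsetI corankL P1O PO LP1 (subsetIr _ _) (nesym PP1) P1nP.
have P1P : comodular O r P1 P by apply: comodular_of_rank; rewrite ?defL //; exact: nesym.
have [Z ZP] := prog_elim_exists P1P P1Pg P1g.
split; rewrite ?P1Pg //; first exact/eqP; exists Z => //.
have [ZO Zg _] := ZP.
have LZ : L \subset zset Z by rewrite -defL -(zset_svopp P1) (elim_result_zsetI ZP).
have gL : g \notin L by rewrite !inE (negbTE Pg) andbF.
have gC : g \in zset C by rewrite inE Cg.
have gZ : g \in zset Z by rewrite inE Zg.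
by case: (corank_le2_cocircuit_eq corankL CO ZO (subsetIl _ _) LZ gC gZ gL) => ->;
  rewrite ?ffunE Cf.
Qed.

Lemma prog_rel_iff_of_elim_agree v X Y X1 Y1 :
  comodular O r X Y -> X g = Y g -> X g != None ->
  comodular O r X1 Y1 -> X1 g = Y1 g -> X1 g != None ->
  (forall W W1, elim_result O (svopp X) Y g W ->
     elim_result O (svopp X1) Y1 g W1 -> W f = W1 f) ->
  prog_rel O r g f v X1 Y1 <-> prog_rel O r g f v X Y.
Proof.
move=> XY XYg Xg X1Y1 X1Y1g X1g agree; split=> -[_ _ _ [Z elimZ <-]].
- have [W elimW] := prog_elim_exists XY XYg Xg.
  by split=> //; [exact/eqP | exists W => //; apply: agree].
- have [W1 elimW1] := prog_elim_exists X1Y1 X1Y1g X1g.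
  by split=> //; [exact/eqP | exists W1 => //; apply/esym/agree].
Qed.

Lemma exists_agreeing_point C X Y X1 :
  3 <= r -> comodular O r C X -> comodular O r C Y ->
  flat_rank O (zset C :&: zset X :&: zset Y) (r - 3) ->
  X1 \in O -> C g = None -> X g != None -> X1 g = X g ->
  zset C :&: zset X \subset zset X1 ->
  exists2 b, b \in zset C :&: zset Y & X b != None /\ X b = X1 b.
Proof.
move=> r3 CX [_ _ _ _ [_ rankCY]] rankK X1O Cg Xg X1Xg CX1.
have [CO XO _ _ _] := CX; rewrite zset_svcomp in rankCY.
have K_proper_CY : zset C :&: zset X :&: zset Y \proper zset C :&: zset Y.
  rewrite properEneq setIAC subsetIl andbT; apply/eqP => KCY.
  by have := flat_rank_uniq rankK; rewrite setIAC KCY => /(_ _ rankCY); lia.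
have [_ [b bCY bK]] := properP K_proper_CY.
have Xb : X b != None.
  by move: bCY bK; rewrite !inE => /andP[-> ->]; rewrite andbT.
exists b => //; split => //.
apply: (corank_le2_sign_agree (comodular_corank_le2 CX) CO XO X1O
  (subsetIl _ _) (subsetIr _ _) CX1 _ _ _ _ (esym X1Xg)).
- by rewrite inE Cg.
- by case/setIP: bCY.
- by rewrite !inE (negbTE Xg) andbF.
- by rewrite !inE (negbTE Xb) andbF.
Qed.

Section EliminationAgreement.
Variables (C X Y X1 Y1 W W1 : svec E) (b : E).
Let K := zset C :&: zset X :&: zset Y.
Hypothesis rankK : flat_rank O K (r - 3).
Hypotheses (CO : C \in O) (Cg : C g = None) (Cf : C f = None) (Xg : X g != None).
Hypotheses (CX1 : zset C :&: zset X \subset zset X1).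
Hypotheses (CY1 : zset C :&: zset Y \subset zset Y1).
Hypotheses (elimW : elim_result O (svopp X) Y g W).
Hypotheses (elimW1 : elim_result O (svopp X1) Y1 g W1).
Hypotheses (bCY : b \in zset C :&: zset Y) (Xb : X b != None) (XX1b : X b = X1 b).

Let Lg := zset C :&: zset W.

Let bC : b \in zset C. Proof. by move: bCY => /setIP[]. Qed.
Let Yb : Y b = None. Proof. by move: bCY; rewrite !inE => /andP[_ /eqP]. Qed.
Let Y1b : Y1 b = None. Proof. by have := subsetP CY1 b bCY; rewrite inE => /eqP. Qed.

Let KC : K \subset zset C.
Proof. by rewrite /K -setIA subsetIl. Qed.

Let KW : K \subset zset W.
Proof.
apply: subset_trans (elim_result_zsetI elimW).
by rewrite zset_svopp /K -setIA subsetIr.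
Qed.

Let KW1 : K \subset zset W1.
Proof.
apply: subset_trans (elim_result_zsetI elimW1).
rewrite zset_svopp subsetI (subset_trans _ CX1) ?subsetIl //.
by rewrite (subset_trans _ CY1) // /K setIAC subsetIl.
Qed.

Let Wb : W b != None.
Proof. by rewrite (elim_result_zero_r elimW Yb) ffunE; case: (X b) Xb. Qed.

Let gLg : g \in Lg.
Proof. by have [_ Wg _] := elimW; rewrite !inE Cg Wg. Qed.

Let gK : g \notin K.
Proof. by rewrite !inE (negbTE Xg) andbF. Qed.

Let K_proper_Lg : K \proper Lg.
Proof. by apply/properP; split; [rewrite subsetI KC KW | exists g; [apply: gLg | apply: gK]]. Qed.

Let flatLg : is_flat O Lg.
Proof. by have [WO _ _] := elimW; apply: flatI; apply: zset_cocircuit_flat. Qed.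

Let Lg_proper_C : Lg \proper zset C.
Proof.
have [WO _ _] := elimW; rewrite properEneq subsetIl andbT.
apply: contraNneq Wb => defLg.
have : zset C \subset zset W by rewrite -defLg subsetIr.
by case/(cocircuit_eq_of_zset_sub WO CO) => ->; rewrite ?ffunE; move: bC; rewrite inE => /eqP->.
Qed.

Let Lg_sub_W1 : Lg \subset zset W1.
Proof.
apply/negPn/negP => LgW1; have [W1O W1g _] := elimW1.
set M := zset W1 :&: Lg.
have K_proper_M : K \proper M.
  apply/properP; split; first by rewrite subsetI KW1 (proper_sub K_proper_Lg).
  by exists g; rewrite // inE gLg inE W1g.
have M_proper_Lg : M \proper Lg.
  by rewrite properEneq subsetIr andbT; apply: contraNneq LgW1 => <-; apply: subsetIl.
have flatM : is_flat O M by apply: flatI (zset_cocircuit_flat W1O) flatLg.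
exact: (corank_le2_proper_superset rankO rankK flatM K_proper_M flatLg
  (zset_cocircuit_flat CO) M_proper_Lg Lg_proper_C (zset_cocircuit_proper CO)).
Qed.

Lemma elim_f_agree : W f = W1 f.
Proof.
have [WO _ _] := elimW; have [W1O _ _] := elimW1.
have [fLg | fLg] := boolP (f \in Lg).
  have := subsetP Lg_sub_W1 f fLg; move: fLg; rewrite !inE => /andP[_ /eqP ->].
  by move=> /eqP ->.
have corankLg := corank_le2_proper_superset rankO rankK flatLg K_proper_Lg.
have fC : f \in zset C by rewrite inE Cf.
have bLg : b \notin Lg by rewrite !inE (negbTE Wb) andbF.
apply: (corank_le2_sign_agree corankLg CO WO W1O (subsetIl _ _) (subsetIr _ _) Lg_sub_W1
  bC fC bLg fLg).
by rewrite (elim_result_zero_r elimW Yb) (elim_result_zero_r elimW1 Y1b) !ffunE XX1b.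
Qed.

End EliminationAgreement.

End Programs.

End Cocircuits.

Theorem lemma4p4 (E : finType) (O : {set svec E}) (g f : E) (r : nat)
    (C X Y X1 Y1 : svec E) :
  is_program O g f ->
  OM_rank O r -> 3 <= r ->
  modular_triple O r C X Y ->
  flat_rank O (zset (svcomp (svcomp C X) Y)) (r - 3) ->
  X g = sp -> Y g = sp -> C g = sz -> C f = sz ->
  X1 \in O -> Y1 \in O -> X1 <> Y1 ->
  X1 g = sp -> Y1 g = sp ->
  zset (svcomp X C) \subset zset X1 ->
  zset (svcomp Y C) \subset zset Y1 ->
  X <> X1 -> X1 <> C -> Y <> Y1 -> Y1 <> C ->
  is_edge O r (svcomp X1 Y1) ->
  [/\ prog_rel O r g f sz X1 X,
      prog_rel O r g f sz Y1 Y &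
      (prog_rel O r g f sp X1 Y1 <-> prog_rel O r g f sp X Y)].
Proof.
move=> [omO _ _ _] rankO r3 [CX CY XY] rankK Xg Yg Cg Cf X1O Y1O X1Y1 X1g Y1g
  LX1 LY1 XX1 _ YY1 _ [_ rankX1Y1]; have [CO _ _ _ _] := CX.
rewrite zset_svcomp setIC in LX1; rewrite zset_svcomp setIC in LY1.
rewrite !zset_svcomp in rankK; rewrite zset_svcomp in rankX1Y1.
have X1Xg : X1 g = X g by rewrite X1g Xg.
have Xg0 : X g != None by rewrite Xg.
split.
- exact: (prog_rel_sz_through omO rankO CX X1O Cg Cf X1Xg Xg0 XX1 LX1).
- by apply: (prog_rel_sz_through omO rankO CY Y1O Cg Cf _ _ YY1 LY1); rewrite ?Y1g ?Yg.
have [b bCY [Xb XX1b]] :=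
  exists_agreeing_point omO rankO r3 CX CY rankK X1O Cg Xg0 X1Xg LX1.
have X1Y1g : X1 g = Y1 g by rewrite X1g Y1g.
have X1g0 : X1 g != None by rewrite X1g.
have comodX1Y1 := comodular_of_rank X1O Y1O X1Y1 (svopp_neq_of_sign X1Y1g X1g0) rankX1Y1.
apply: (prog_rel_iff_of_elim_agree omO rankO _ XY _ Xg0 comodX1Y1 X1Y1g X1g0)
  => [|W W1 elimW elimW1]; first by rewrite Xg Yg.
exact: (elim_f_agree omO rankO rankK CO Cg Cf Xg0 LX1 LY1 elimW elimW1 bCY Xb XX1b).
Qed.
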